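(* Let $p,q\in\mathbb{R}$ with $q\neq0$ and $$\hat{\mathcal{B}}=\begin{pmatrix}p&qi&\frac{q}{6}(\sqrt5\,k+2\ell)\\ -qi&p&\frac q2 j\\ -\frac q6(\sqrt5\,k+2\ell)&-\frac q2 j&p\end{pmatrix},\qquad w_1=\begin{pmatrix}3k\\ \sqrt5 j-2i\ell\\ -7-\sqrt5 k\ell\end{pmatrix}.$$ There do not exist nonzero $u,v\in\mathbb{O}^3$ and $\mu,\nu\in\mathbb{O}$ with $\hat{\mathcal{B}}u=u\mu$, $\hat{\mathcal{B}}v=v\nu$ such that the three vectors $w_1,u,v$ are pairwise orthogonal in the sense that $(xx^\dagger)y=0$ for every ordered pair $(x,y)$ of distinct vectors among $w_1,u,v$.
   Context: $\mathbb{O}$ is the octonion algebra with real basis $1,i,j,k,\ell,i\ell,j\ell,k\ell$, obtained by Cayley–Dickson doubling of the quaternions ($ij=k$, $jk=i$, $ki=j$): $(a+b\ell)(c+d\ell)=(ac-\overline{d}b)+(da+b\overline{c})\ell$ for quaternions $a,b,c,d$. $xx^\dagger$ is the $3\times3$ matrix with entries $x_i\overline{x_j}$, and $(xx^\dagger)y$ is the matrix–vector product computed with octonionic multiplication. $u\mu$ means componentwise right multiplication. *)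

From Stdlib Require Import Reals.
Open Scope R_scope.

(* Quaternions a0 + a1 i + a2 j + a3 k, with ij = k, jk = i, ki = j. *)
Record quat := Quat { q0 : R; q1 : R; q2 : R; q3 : R }.

Definition qadd (x y : quat) : quat :=
  Quat (q0 x + q0 y) (q1 x + q1 y) (q2 x + q2 y) (q3 x + q3 y).
Definition qopp (x : quat) : quat := Quat (- q0 x) (- q1 x) (- q2 x) (- q3 x).
Definition qconj (x : quat) : quat := Quat (q0 x) (- q1 x) (- q2 x) (- q3 x).
Definition qmul (x y : quat) : quat :=
  Quat (q0 x * q0 y - q1 x * q1 y - q2 x * q2 y - q3 x * q3 y)
       (q0 x * q1 y + q1 x * q0 y + q2 x * q3 y - q3 x * q2 y)
       (q0 x * q2 y - q1 x * q3 y + q2 x * q0 y + q3 x * q1 y)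
       (q0 x * q3 y + q1 x * q2 y - q2 x * q1 y + q3 x * q0 y).

(* Octonions a + b l (Cayley-Dickson doubling of the quaternions). *)
Record oct := Oct { oa : quat; ob : quat }.

Definition oadd (x y : oct) : oct := Oct (qadd (oa x) (oa y)) (qadd (ob x) (ob y)).
Definition oopp (x : oct) : oct := Oct (qopp (oa x)) (qopp (ob x)).
Definition oconj (x : oct) : oct := Oct (qconj (oa x)) (qopp (ob x)).
(* (a + b l)(c + d l) = (ac - conj(d) b) + (d a + b conj(c)) l *)
Definition omul (x y : oct) : oct :=
  Oct (qadd (qmul (oa x) (oa y)) (qopp (qmul (qconj (ob y)) (ob x))))
      (qadd (qmul (ob y) (oa x)) (qmul (ob x) (qconj (oa y)))).

Definition oreal (r : R) : oct := Oct (Quat r 0 0 0) (Quat 0 0 0 0).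
Definition ozero : oct := oreal 0.
Definition oscal (r : R) (x : oct) : oct := omul (oreal r) x.
Definition oi : oct := Oct (Quat 0 1 0 0) (Quat 0 0 0 0).
Definition oj : oct := Oct (Quat 0 0 1 0) (Quat 0 0 0 0).
Definition ok : oct := Oct (Quat 0 0 0 1) (Quat 0 0 0 0).
Definition ol : oct := Oct (Quat 0 0 0 0) (Quat 1 0 0 0).

Inductive idx3 := I0 | I1 | I2.
Definition ovec := idx3 -> oct.
Definition omat := idx3 -> idx3 -> oct.

Definition vzero (x : ovec) : Prop := forall i, x i = ozero.

Definition mvmul (M : omat) (y : ovec) : ovec :=
  fun i => oadd (omul (M i I0) (y I0)) (oadd (omul (M i I1) (y I1)) (omul (M i I2) (y I2))).

Definition outer (x : ovec) : omat := fun i j => omul (x i) (oconj (x j)).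

Definition vrmul (u : ovec) (mu : oct) : ovec := fun i => omul (u i) mu.

Definition orth (x y : ovec) : Prop := vzero (mvmul (outer x) y).

Definition mk3 (a b c : oct) : ovec :=
  fun i => match i with I0 => a | I1 => b | I2 => c end.
Definition mk33 (a b c d e f g h k : oct) : omat :=
  fun i => match i with I0 => mk3 a b c | I1 => mk3 d e f | I2 => mk3 g h k end.

Definition Bhat (p q : R) : omat :=
  let e13 := oscal (q / 6) (oadd (oscal (sqrt 5) ok) (oscal 2 ol)) in
  mk33 (oreal p)            (oscal q oi)            e13
       (oopp (oscal q oi))  (oreal p)               (oscal (q / 2) oj)
       (oopp e13)           (oopp (oscal (q / 2) oj)) (oreal p).

Definition w1 : ovec :=
  mk3 (oscal 3 ok)
      (oadd (oscal (sqrt 5) oj) (oopp (oscal 2 (omul oi ol))))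
      (oadd (oreal (-7)) (oopp (oscal (sqrt 5) (omul ok ol)))).

From Pilot Require Import Defs.
From Stdlib Require Import Reals Lra FunctionalExtensionality.
Open Scope R_scope.

(* Since [Bhat p q = p + (q/6) Cmat] with [Cmat] independent of [p] and [q], an
   eigenvector [u] of [Bhat p q] satisfies [Cmat u = u m] for a suitable [m].  The real
   kernel of [w1 w1^dagger] is 8-dimensional; on it, the 24 real equations of [Cmat u = u m]
   force, via a sum-of-squares argument, [u = (e b + g a, e a - g b, 0)] where [(a, b, _)]
   is [w1].  For two vectors [u], [v] of this shape, [(u u^dagger) v = 18 (e^2 + g^2) v],
   so they can only be orthogonal if one of them vanishes. *)

Lemma weighted_sum_sq_eq0 (wa wb wc wd a b c d : R) :
  0 < wa -> 0 < wb -> 0 < wc -> 0 < wd ->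
  wa * a ^ 2 + wb * b ^ 2 + wc * c ^ 2 + wd * d ^ 2 = 0 ->
  a = 0 /\ b = 0 /\ c = 0 /\ d = 0.
Proof.
  intros ha hb hc hd H.
  assert (0 <= wa * a ^ 2) by (apply Rmult_le_pos; [lra | apply pow2_ge_0]).
  assert (0 <= wb * b ^ 2) by (apply Rmult_le_pos; [lra | apply pow2_ge_0]).
  assert (0 <= wc * c ^ 2) by (apply Rmult_le_pos; [lra | apply pow2_ge_0]).
  assert (0 <= wd * d ^ 2) by (apply Rmult_le_pos; [lra | apply pow2_ge_0]).
  repeat split; apply Rsqr_0_uniq; rewrite Rsqr_pow2.
  - apply (Rmult_eq_reg_l wa); lra.
  - apply (Rmult_eq_reg_l wb); lra.
  - apply (Rmult_eq_reg_l wc); lra.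
  - apply (Rmult_eq_reg_l wd); lra.
Qed.

(* Polynomial consequences are proved from explicit certificates: [lincomb h c] subtracts
   [c] times the equation [h] from the goal, and [sqrt5_ring] checks that what is left is
   an identity modulo [s * s = 5]. *)
Lemma lincomb_step (x y c l r : R) : l = r -> x - y - c * (l - r) = 0 -> x = y.
Proof. intros -> H; lra. Qed.

Ltac lincomb h c := apply (lincomb_step _ _ c _ _ h).

Lemma pow_SS_sqrt5 (s : R) (n : nat) : s * s = 5 -> s ^ S (S n) = 5 * s ^ n.
Proof. intros hs; simpl; rewrite <- hs; ring. Qed.

Ltac sqrt5_ring :=
  match goal with hs : ?s * ?s = 5 |- _ =>
    field_simplify; repeat rewrite (pow_SS_sqrt5 s _ hs); field end.

Ltac generalize_sqrt5 s hs :=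
  assert (hs : sqrt 5 * sqrt 5 = 5) by (apply sqrt_sqrt; lra);
  set (s := sqrt 5) in *; clearbody s.

Definition oct8 (a0 a1 a2 a3 a4 a5 a6 a7 : R) : oct :=
  Oct (Quat a0 a1 a2 a3) (Quat a4 a5 a6 a7).

(* The projections are qualified so that variables named [q0], ... introduced by
   [destruct] cannot shadow them. *)
Ltac oct_unfold :=
  cbv [oct8 mk3 mk33 mvmul vrmul outer oadd oopp oconj omul oscal oreal ozero
       oi oj ok ol qadd qopp qconj qmul Defs.q0 Defs.q1 Defs.q2 Defs.q3 Defs.oa Defs.ob] in *.

Lemma ovec_eta (u : ovec) : u = mk3 (u I0) (u I1) (u I2).
Proof. extensionality i; destruct i; reflexivity. Qed.

Lemma oadd_oopp_r (x : oct) : oadd x (oopp x) = ozero.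
Proof. destruct x as [[] []]; oct_unfold; f_equal; f_equal; ring. Qed.

Lemma oadd_oopp_eq0 (x y : oct) : oadd x (oopp y) = ozero -> x = y.
Proof.
  destruct x as [[] []], y as [[] []]; oct_unfold; intros H; injection H; intros.
  f_equal; f_equal; lra.
Qed.

Lemma oscal_eq0 (r : R) (x : oct) : r <> 0 -> oscal r x = ozero -> x = ozero.
Proof.
  intros hr; destruct x as [[] []]; oct_unfold; intros H; injection H; intros.
  f_equal; f_equal; apply (Rmult_eq_reg_l r); lra.
Qed.

(* [Bhat p q = p + (q/6) Cmat], see [Bhat_residual]. *)
Definition Cmat : omat :=
  let s := sqrt 5 in
  mk33 ozero                        (oct8 0 6 0 0 0 0 0 0)     (oct8 0 0 0 s 2 0 0 0)
       (oct8 0 (-6) 0 0 0 0 0 0)    ozero                      (oct8 0 0 3 0 0 0 0 0)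
       (oct8 0 0 0 (-s) (-2) 0 0 0) (oct8 0 0 (-3) 0 0 0 0 0)  ozero.

Lemma Bhat_residual (p q : R) (u : ovec) (m : oct) (i : idx3) :
  oadd (mvmul (Bhat p q) u i) (oopp (vrmul u (oadd (oreal p) (oscal (q / 6) m)) i)) =
  oscal (q / 6) (oadd (mvmul Cmat u i) (oopp (vrmul u m i))).
Proof.
  rewrite (ovec_eta u).
  destruct (u I0) as [[] []], (u I1) as [[] []], (u I2) as [[] []], m as [[] []].
  destruct i; cbv [Cmat Bhat]; oct_unfold; f_equal; f_equal; lra.
Qed.

Lemma Bhat_eigen_Cmat (p q : R) (u : ovec) (mu : oct) : q <> 0 ->
  mvmul (Bhat p q) u = vrmul u mu ->
  mvmul Cmat u = vrmul u (oscal (6 / q) (oadd mu (oopp (oreal p)))).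
Proof.
  intros hq H.
  assert (hmu : mu = oadd (oreal p) (oscal (q / 6) (oscal (6 / q) (oadd mu (oopp (oreal p)))))).
  { destruct mu as [[] []]; oct_unfold; f_equal; f_equal; field; exact hq. }
  extensionality i; apply oadd_oopp_eq0, (oscal_eq0 (q / 6)).
  - lra.
  - rewrite <- (Bhat_residual p q), <- hmu, H; apply oadd_oopp_r.
Qed.

Lemma w1_coords :
  w1 = mk3 (oct8 0 0 0 3 0 0 0 0) (oct8 0 0 (sqrt 5) 0 0 (-2) 0 0)
           (oct8 (-7) 0 0 0 0 0 0 (- sqrt 5)).
Proof. extensionality i; destruct i; cbv [w1]; oct_unfold; f_equal; f_equal; ring. Qed.

Definition W1 : omat :=
  let s := sqrt 5 in
  mk33 (oct8 9 0 0 0 0 0 0 0)      (oct8 0 (3*s) 0 0 0 0 (-6) 0)  (oct8 0 0 0 (-21) (-3*s) 0 0 0)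
       (oct8 0 (-3*s) 0 0 0 0 6 0) (oct8 9 0 0 0 0 0 0 0)         (oct8 0 0 (-9*s) 0 0 9 0 0)
       (oct8 0 0 0 21 (3*s) 0 0 0) (oct8 0 0 (9*s) 0 0 (-9) 0 0)  (oct8 54 0 0 0 0 0 0 0).

Lemma outer_w1 : outer w1 = W1.
Proof.
  rewrite w1_coords; cbv [W1]; generalize_sqrt5 s hs.
  extensionality i; extensionality j; destruct i, j; oct_unfold; f_equal; f_equal; lra.
Qed.

(* Parametrizes the kernel of [W1]: its 24 real equations split into four blocks of six
   unknowns, each of rank 4. *)
Definition ker_w1 (a b c d e f g h : R) : ovec :=
  let s := sqrt 5 in
  mk3 (oct8 (-7*a - 7*b) (3*s*d - 15*c) (s*e - 2*s*f) (18*s*h + 3*g)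
            0 (-2*e + 4*f) (3*s*c - 3*d) (-s*a - s*b))
      (oct8 (7*s*c) (-3*s*a) (-s*g) (3*e) 0 (2*g) (3*a) (5*c))
      (oct8 (7*s*h) (-s*f) (-s*d) (3*b) 0 (2*d) f (5*h)).

Lemma orth_w1_ker (u : ovec) :
  orth w1 u -> exists a b c d e f g h, u = ker_w1 a b c d e f g h.
Proof.
  unfold orth; rewrite outer_w1, (ovec_eta u).
  destruct (u I0) as [[x00 x01 x02 x03] [x04 x05 x06 x07]],
           (u I1) as [[x10 x11 x12 x13] [x14 x15 x16 x17]],
           (u I2) as [[x20 x21 x22 x23] [x24 x25 x26 x27]].
  intros Ho; pose proof (Ho I0) as H0; pose proof (Ho I1) as H1; pose proof (Ho I2) as H2.
  exists (x16 / 3), (x23 / 3), (x17 / 5), (x25 / 2), (x13 / 3), x26, (x15 / 2), (x27 / 5).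
  cbv [ker_w1 W1] in *; generalize_sqrt5 s hs; oct_unfold.
  injection H0 as o00 o01 o02 o03 o04 o05 o06 o07.
  injection H1 as o10 o11 o12 o13 o14 o15 o16 o17.
  injection H2 as o20 o21 o22 o23 o24 o25 o26 o27.
  assert (x00 = -7/3 * (x16 + x23))
    by (lincomb o00 (14/81); lincomb o07 (-5/162*s); lincomb o11 (1/54*s); lincomb o24 (-1/54*s); sqrt5_ring).
  assert (x01 = 3/2*s*x25 - 3*x17)
    by (lincomb o01 (1/2); lincomb o06 (-1/20*s); lincomb o10 (-7/60*s); lincomb o22 (-1/12); sqrt5_ring).
  assert (x02 = s/3*x13 - 2*s*x26)
    by (lincomb o02 (-5/81); lincomb o05 (-5/162*s); lincomb o14 (7/54); lincomb o21 (-1/27); sqrt5_ring).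
  assert (x03 = 3/2*x15 + 18/5*s*x27)
    by (lincomb o03 (1/2); lincomb o04 (-1/20*s); lincomb o12 (-7/60*s); lincomb o20 (1/12); sqrt5_ring).
  assert (x04 = 0)
    by (lincomb o03 (-1/20*s); lincomb o12 (-1/12); lincomb o20 (-1/30*s); sqrt5_ring).
  assert (x05 = -2/3*x13 + 4*x26)
    by (lincomb o02 (-5/162*s); lincomb o05 (14/81); lincomb o14 (-1/54*s); lincomb o21 (-1/54*s); sqrt5_ring).
  assert (x06 = 3/5*s*x17 - 3/2*x25)
    by (lincomb o01 (-1/20*s); lincomb o10 (-1/12); lincomb o22 (1/30*s); sqrt5_ring).
  assert (x07 = -s/3 * (x16 + x23))
    by (lincomb o00 (-5/162*s); lincomb o07 (-5/81); lincomb o11 (-7/54); lincomb o24 (-1/27); sqrt5_ring).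
  assert (x10 = 7/5*s*x17)
    by (lincomb o01 (-7/60*s); lincomb o06 (-1/12); lincomb o22 (1/20*s); sqrt5_ring).
  assert (x11 = -s*x16)
    by (lincomb o00 (1/54*s); lincomb o07 (-7/54); lincomb o24 (-1/18); sqrt5_ring).
  assert (x12 = -s/2*x15)
    by (lincomb o03 (-7/60*s); lincomb o04 (-1/12); lincomb o20 (-1/20*s); sqrt5_ring).
  assert (x14 = 0)
    by (lincomb o02 (7/54); lincomb o05 (-1/54*s); lincomb o21 (1/18); sqrt5_ring).
  assert (x20 = 7/5*s*x27)
    by (lincomb o03 (1/12); lincomb o04 (-1/30*s); lincomb o12 (-1/20*s); sqrt5_ring).
  assert (x21 = -s*x26)
    by (lincomb o02 (-1/27); lincomb o05 (-1/54*s); lincomb o14 (1/18); sqrt5_ring).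
  assert (x22 = -s/2*x25)
    by (lincomb o01 (-1/12); lincomb o06 (1/30*s); lincomb o10 (1/20*s); sqrt5_ring).
  assert (x24 = 0)
    by (lincomb o00 (-1/54*s); lincomb o07 (-1/27); lincomb o11 (-1/18); sqrt5_ring).
  subst x00 x01 x02 x03 x04 x05 x06 x07 x10 x11 x12 x14 x20 x21 x22 x24.
  extensionality i; destruct i; f_equal; f_equal; field.
Qed.

Lemma Cmat_eigen_ker_w1 (a b c d e f g h : R) (m : oct) :
  mvmul Cmat (ker_w1 a b c d e f g h) = vrmul (ker_w1 a b c d e f g h) m ->
  a = 0 /\ b = 0 /\ c = 0 /\ d = 0 /\ f = 0 /\ h = 0.
Proof.
  destruct m as [[m0 m1 m2 m3] [m4 m5 m6 m7]]; intros H.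
  pose proof (equal_f H I0) as H0; pose proof (equal_f H I1) as H1; pose proof (equal_f H I2) as H2.
  clear H; cbv [Cmat ker_w1] in *; generalize_sqrt5 s hs; oct_unfold.
  injection H0 as e00 e01 e02 e03 e04 e05 e06 e07.
  injection H1 as e10 e11 e12 e13 e14 e15 e16 e17.
  injection H2 as e20 e21 e22 e23 e24 e25 e26 e27.
  (* Either [3b^2 + 3d^2 + 2f^2 + 90h^2 = 0], or [Re m = 3 sqrt 5]; in the second case a
     sum-of-squares identity followed by linear relations makes the vector vanish. *)
  assert (hN : (3*b^2 + 3*d^2 + 2*f^2 + 90*h^2) * (m0 - 3*s) = 0).
  { lincomb e20 (-7/3*h*s); lincomb e21 (1/3*f*s); lincomb e22 (1/3*d*s); lincomb e23 (-b);
    lincomb e25 (-2/3*d); lincomb e26 (-1/3*f); lincomb e27 (-5/3*h); sqrt5_ring. }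
  destruct (Rmult_integral _ _ hN) as [hN0 | hm].
  - destruct (weighted_sum_sq_eq0 3 3 2 90 b d f h ltac:(lra) ltac:(lra) ltac:(lra) ltac:(lra) hN0)
      as (-> & -> & -> & ->).
    assert (a = 0)
      by (lincomb e24 (1/18); sqrt5_ring).
    assert (c = 0)
      by (lincomb e22 (-1/60*s); sqrt5_ring).
    tauto.
  - assert (m0 = 3*s) by lra; subst m0.
    assert (hD : 10*(e - f)^2 + 10*(g + 3*s*h)^2 + 15*(2*a + b)^2 + 3*(10*c - s*d)^2 = 0).
    { lincomb e00 (7/45*b*s + 7/45*a*s); lincomb e01 (-1/3*d + 1/3*c*s); lincomb e02 (2/9*f - 1/9*e);
      lincomb e03 (-2*h - 1/15*g*s); lincomb e05 (-4/45*f*s + 2/45*e*s); lincomb e06 (1/15*d*s - 1/3*c);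
      lincomb e07 (1/9*b + 1/9*a); lincomb e10 (-7/9*c); lincomb e11 (1/3*a); lincomb e12 (1/9*g);
      lincomb e13 (-1/15*e*s); lincomb e15 (-2/45*g*s); lincomb e16 (-1/15*a*s); lincomb e17 (-1/9*c*s);
      sqrt5_ring. }
    destruct (weighted_sum_sq_eq0 10 10 15 3 _ _ _ _ ltac:(lra) ltac:(lra) ltac:(lra) ltac:(lra) hD)
      as (hef & hgh & hab & hcd).
    assert (f = e) by lra; assert (g = -3*s*h) by lra; assert (b = -2*a) by lra.
    assert (d = 2*s*c) by (lincomb hcd (-s/5); sqrt5_ring).
    subst f g b d.
    assert (a = 0)
      by (lincomb e00 (1/40*s); lincomb e11 (1/24); lincomb e16 (-1/60*s); sqrt5_ring).
    assert (c = 0)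
      by (lincomb e01 (-1/75*s); lincomb e06 (2/75); lincomb e22 (-1/50*s); lincomb e25 (1/50); sqrt5_ring).
    assert (e = 0)
      by (lincomb e02 (-1/6); lincomb e05 (1/30*s); lincomb e21 (1/6); lincomb e26 (-1/15*s); sqrt5_ring).
    assert (h = 0)
      by (lincomb e12 (1/120*s); lincomb e15 (-1/120); lincomb e20 (-1/40); sqrt5_ring).
    subst a c e h; repeat split; ring.
Qed.

Definition w1_swap (e g : R) : ovec :=
  mk3 (oadd (oscal e (w1 I1)) (oscal g (w1 I0)))
      (oadd (oscal e (w1 I0)) (oopp (oscal g (w1 I1))))
      ozero.

Lemma ker_w1_swap (e g : R) : ker_w1 0 0 0 0 e 0 g 0 = w1_swap e g.
Proof.
  extensionality i; destruct i; cbv [ker_w1 w1_swap]; rewrite w1_coords; oct_unfold.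
  all: f_equal; f_equal; ring.
Qed.

Lemma eigen_orth_w1 (p q : R) (u : ovec) (mu : oct) : q <> 0 ->
  mvmul (Bhat p q) u = vrmul u mu -> orth w1 u -> exists e g, u = w1_swap e g.
Proof.
  intros hq Hu Ho.
  destruct (orth_w1_ker u Ho) as (a & b & c & d & e & f & g & h & ->).
  destruct (Cmat_eigen_ker_w1 a b c d e f g h _ (Bhat_eigen_Cmat p q _ mu hq Hu))
    as (-> & -> & -> & -> & -> & ->).
  exists e, g; apply ker_w1_swap.
Qed.

Lemma outer_w1_swap (e g y z : R) :
  mvmul (outer (w1_swap e g)) (w1_swap y z)
  = w1_swap (18 * (e * e + g * g) * y) (18 * (e * e + g * g) * z).
Proof.
  rewrite <- !ker_w1_swap; cbv [ker_w1]; generalize_sqrt5 s hs.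
  extensionality i; destruct i; oct_unfold; f_equal; f_equal; first [lra | sqrt5_ring].
Qed.

Lemma w1_swap_vzero (y z : R) : vzero (w1_swap y z) -> y = 0 /\ z = 0.
Proof.
  rewrite <- ker_w1_swap; intros H; pose proof (H I0) as H0; pose proof (H I1) as H1.
  cbv [ker_w1] in *; oct_unfold.
  injection H0; injection H1; intros; lra.
Qed.

Lemma vzero_w1_swap0 : vzero (w1_swap 0 0).
Proof.
  rewrite <- ker_w1_swap; intros i; destruct i; cbv [ker_w1]; oct_unfold; f_equal; f_equal; ring.
Qed.

Theorem mainTheorem12 (p q : R) (hq : q <> 0) :
  ~ (exists (u v : ovec) (mu nu : oct),
       ~ vzero u /\ ~ vzero v /\
       mvmul (Bhat p q) u = vrmul u mu /\
       mvmul (Bhat p q) v = vrmul v nu /\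
       orth w1 u /\ orth u w1 /\
       orth w1 v /\ orth v w1 /\
       orth u v /\ orth v u).
Proof.
  intros (u & v & mu & nu & hu & hv & Hu & Hv & hwu & _ & hwv & _ & huv & _).
  destruct (eigen_orth_w1 p q u mu hq Hu hwu) as (e & g & ->).
  destruct (eigen_orth_w1 p q v nu hq Hv hwv) as (y & z & ->).
  unfold orth in huv; rewrite outer_w1_swap in huv.
  apply w1_swap_vzero in huv as [hy hz].
  destruct (Req_dec (e * e + g * g) 0) as [h0 | h0].
  - apply hu; apply Rplus_sqr_eq_0 in h0 as [-> ->]; apply vzero_w1_swap0.
  - apply hv.
    apply Rmult_integral in hy as [hy | ->]; [lra |].
    apply Rmult_integral in hz as [hz | ->]; [lra |].
    apply vzero_w1_swap0.
Qed.
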